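(* $H'$ is a free, infinitely generated monoid. It acts on $\mathcal P$ by left multiplication ($M(x,y,z)^t\in\mathcal P$ for all $M\in H'$, $(x,y,z)\in\mathcal P$), and this action is free in the sense that for each $(x,y,z)\in\mathcal P$ there is a unique $M\in H'$ with $M(1,0,1)^t=(x,y,z)^t$. With respect to this action, $\mathcal P$ (with root $(1,0,1)$) has the structure of the Cayley digraph of $H'$ with respect to a free generating set, which is a regular rooted infinite tree in which every vertex has infinite degree.
   Context: Let $\mathfrak P=\{(x,y,z)\in\mathbb Z_{>0}^3: 2\mid y,\ \gcd(x,y,z)=1,\ x^2+y^2=z^2\}$ and $\mathcal P=\{(x,y,z)\in\mathfrak P:\min\{x,y\}<z/2\}\cup\{(1,0,1)\}$. Let $A=\begin{pmatrix}1&-2&2\\2&-1&2\\2&-2&3\end{pmatrix}$, $B=\begin{pmatrix}1&2&2\\2&1&2\\2&2&3\end{pmatrix}$, $C=\begin{pmatrix}-1&2&2\\-2&1&2\\-2&2&3\end{pmatrix}$, and let $G$ be the monoid generated by $I_3,A,B,C$ under matrix multiplication, acting on triples as column vectors. Let $H$ be the set of all matrices of the forms $A^2NB$, $A^kB$, $ABNB$, $C^2NB$, $C^kB$, $CBNB$, $(AC)^kA^2NB$, $(AC)^kABNB$, $(AC)^kAB$, $(CA)^kC^2NB$, $(CA)^kCBNB$, $(CA)^kCB$, with $N\in G$ and $k\in\mathbb Z_{>0}$, and $H'=H\cup\{I_3\}$. For a monoid with generating set $X$, its Cayley digraph has the elements as vertices and an edge $g\to h$ whenever $h=gx$ for some $x\in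 X$. *)

From HB Require Import structures.
From mathcomp Require Import all_boot all_order all_algebra.
Set Implicit Arguments. Unset Strict Implicit. Unset Printing Implicit Defensive.
Import Order.TTheory GRing.Theory Num.Theory.
Local Open Scope ring_scope.

Definition mx3 (a b c d e f g h i : int) : 'M[int]_3 :=
  \matrix_(r < 3, s < 3)
    nth 0 (nth [::] [:: [:: a; b; c]; [:: d; e; f]; [:: g; h; i]] r) s.

Definition col3 (x y z : int) : 'cV[int]_3 :=
  \col_(r < 3) nth 0 [:: x; y; z] r.

Definition matA : 'M[int]_3 := mx3 1 (-2) 2 2 (-1) 2 2 (-2) 3.
Definition matB : 'M[int]_3 := mx3 1 2 2 2 1 2 2 2 3.
Definition matC : 'M[int]_3 := mx3 (-1) 2 2 (-2) 1 2 (-2) 2 3.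

Definition inPfrak (x y z : int) : Prop :=
  0 < x /\ 0 < y /\ 0 < z /\ (2 %| y)%Z /\
  gcdz (gcdz x y) z = 1 /\ x ^+ 2 + y ^+ 2 = z ^+ 2.

Definition inP (v : 'cV[int]_3) : Prop :=
  exists x y z : int, v = col3 x y z /\
    ((inPfrak x y z /\ 2 * Num.min x y < z) \/ (x = 1 /\ y = 0 /\ z = 1)).

Inductive inG : 'M[int]_3 -> Prop :=
| inG1 : inG 1%:M
| inGA M : inG M -> inG (M *m matA)
| inGB M : inG M -> inG (M *m matB)
| inGC M : inG M -> inG (M *m matC).

Definition inH (M : 'M[int]_3) : Prop :=
  exists (N : 'M[int]_3) (k : nat), inG N /\ (0 < k)%N /\
  let A := matA in let B := matB in let C := matC in
  (M = A ^+ 2 *m N *m B \/ M = A ^+ k *m B \/ M = A *m B *m N *m B \/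
   M = C ^+ 2 *m N *m B \/ M = C ^+ k *m B \/ M = C *m B *m N *m B \/
   M = (A *m C) ^+ k *m A ^+ 2 *m N *m B \/
   M = (A *m C) ^+ k *m A *m B *m N *m B \/
   M = (A *m C) ^+ k *m A *m B \/
   M = (C *m A) ^+ k *m C ^+ 2 *m N *m B \/
   M = (C *m A) ^+ k *m C *m B *m N *m B \/
   M = (C *m A) ^+ k *m C *m B).

Definition inH' (M : 'M[int]_3) : Prop := inH M \/ M = 1%:M.

Definition mprod (s : seq 'M[int]_3) : 'M[int]_3 := foldr (@mulmx _ _ _ _) 1%:M s.

Definition infinite_set (T : eqType) (S : T -> Prop) : Prop :=
  forall s : seq T, exists x, S x /\ x \notin s.

Definition cayley_edge (X : 'M[int]_3 -> Prop) (g h : 'M[int]_3) : Prop :=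
  exists x, X x /\ h = g *m x.

Inductive reach (E : 'M[int]_3 -> 'M[int]_3 -> Prop) (g : 'M[int]_3)
  : 'M[int]_3 -> Prop :=
| reach_refl : reach E g g
| reach_step h k : reach E g h -> E h k -> reach E g k.

Definition all_Prop (T : eqType) (X : T -> Prop) (s : seq T) : Prop :=
  forall x, x \in s -> X x.

(* Each preserves the Lorentz
   form x^2 + y^2 - z^2 and is invertible over Z, hence preserves the gcd of
   the entries.  Since A = B diag(1,-1,1) and C = B diag(-1,1,1), every letter
   acts as B after a sign change, so the signs of B^-1 p tell which letter
   produced p.  Descent along B^-1 and this sign rule show that w |-> w (3,4,5)
   is a bijection from words over {A,B,C} onto the primitive triples with y
   even (Berggren's theorem).

   A two-bit automaton records (z < 2x, z < 2y) along a word; the "good" words,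
   whose triple has min{x,y} < z/2, are described by the inductive predicate
   [shape], and matching shapes against the twelve families gives
   H = { wmat w * B | w good }.  As B (1,0,1) = (3,4,5), H' is a monoid acting
   on P, simply transitively on the orbit of (1,0,1).

   The state of a word u B v is the state of u, so a good word splits uniquely
   into irreducible good words separated by B: H' is free on
   X = { wmat w * B | w irreducible }.  A general section on free monoids then
   turns unique factorisation into the Cayley tree properties, and the words
   A^n supply infinitely many generators. *)

From HB Require Import structures.
From mathcomp Require Import all_boot all_order all_algebra.
From mathcomp Require Import zify ring.
From Stdlib Require Import Classical.
Set Implicit Arguments.
Unset Strict Implicit.
Unset Printing Implicit Defensive.
Import Order.TTheory GRing.Theory Num.Theory.
Local Open Scope ring_scope.

Inductive letter := LA | LB | LC.

Lemma letter_eq_dec : comparable letter.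
Proof. by move=> l m; rewrite /decidable; decide equality. Defined.
HB.instance Definition _ := comparableMixin letter_eq_dec.

Definition trip := (int * int * int)%type.

Definition actB (t : trip) : trip :=
  let '(x, y, z) := t in (x + 2 * y + 2 * z, 2 * x + y + 2 * z, 2 * x + 2 * y + 3 * z).

Definition actB_inv (t : trip) : trip :=
  let '(x, y, z) := t in (x + 2 * y - 2 * z, 2 * x + y - 2 * z, 3 * z - 2 * x - 2 * y).

(* A = B diag(1,-1,1) and C = B diag(-1,1,1): each letter is B after a sign change. *)
Definition twist (l : letter) (t : trip) : trip :=
  let '(x, y, z) := t in
  match l with LA => (x, - y, z) | LB => (x, y, z) | LC => (- x, y, z) end.

Definition act (l : letter) (t : trip) : trip := actB (twist l t).

Definition run (w : seq letter) (t : trip) : trip := foldr act t w.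

Definition t345 : trip := (3, 4, 5).

Lemma actBK : cancel actB actB_inv.
Proof. by case=> [[x y] z] /=; congr (_, _, _); ring. Qed.

Lemma actB_invK : cancel actB_inv actB.
Proof. by case=> [[x y] z] /=; congr (_, _, _); ring. Qed.

Lemma twistK l : involutive (twist l).
Proof. by case: l => -[[x y] z] //=; rewrite opprK. Qed.

Definition lorentz (t : trip) : int := t.1.1 ^+ 2 + t.1.2 ^+ 2 - t.2 ^+ 2.

Lemma lorentz_actB t : lorentz (actB t) = lorentz t.
Proof. by case: t => [[x y] z]; rewrite /lorentz /=; ring. Qed.

Lemma lorentz_actB_inv t : lorentz (actB_inv t) = lorentz t.
Proof. by rewrite -{2}(actB_invK t) lorentz_actB. Qed.

Lemma lorentz_twist l t : lorentz (twist l t) = lorentz t.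
Proof. by case: l; case: t => [[x y] z]; rewrite /lorentz //= sqrrN. Qed.

Definition dvd3 (d : int) (t : trip) : bool :=
  let '(x, y, z) := t in [&& d %| x, d %| y & d %| z]%Z.

Lemma dvd3_actB d t : dvd3 d t -> dvd3 d (actB t).
Proof.
by case: t => [[x y] z] /and3P[dx dy dz] /=; rewrite !(rpredB, rpredD, rpredN, dvdz_mull).
Qed.

Lemma dvd3_actB_inv d t : dvd3 d t -> dvd3 d (actB_inv t).
Proof.
by case: t => [[x y] z] /and3P[dx dy dz] /=; rewrite !(rpredB, rpredD, rpredN, dvdz_mull).
Qed.

Lemma dvd3_twist d l t : dvd3 d (twist l t) = dvd3 d t.
Proof. by case: l; case: t => [[x y] z] //=; rewrite rpredN. Qed.

Definition gcd3 (t : trip) : int := let '(x, y, z) := t in gcdz (gcdz x y) z.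

Lemma gcd3_eq1P t : gcd3 t = 1 <-> forall d, dvd3 d t -> (d %| 1)%Z.
Proof.
case: t => [[x y] z] /=; split=> [g1 d /and3P[dx dy dz] | hdiv].
  by rewrite -[X in (_ %| X)%Z]g1 !dvdz_gcd dx dy dz.
have /hdiv : dvd3 (gcdz (gcdz x y) z) (x, y, z).
  rewrite /= dvdz_gcdr !(dvdz_trans (dvdz_gcdl _ z)) ?dvdz_gcdl ?dvdz_gcdr //.
by rewrite dvdz1 /gcdz /= => /eqP ->.
Qed.

Lemma gcd3_transfer t t' :
  (forall d, dvd3 d t' -> dvd3 d t) -> gcd3 t = 1 -> gcd3 t' = 1.
Proof. by move=> sub /gcd3_eq1P h; apply/gcd3_eq1P => d /sub /h. Qed.

(* Being invertible over Z, every letter preserves primitivity both ways. *)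
Lemma gcd3_act l t : gcd3 (act l t) = 1 <-> gcd3 t = 1.
Proof.
split; apply: gcd3_transfer => d.
  by rewrite -(dvd3_twist d l) => /dvd3_actB.
by move=> /dvd3_actB_inv; rewrite /act actBK dvd3_twist.
Qed.

Definition pyth (t : trip) : Prop := let '(x, y, z) := t in inPfrak x y z.

Lemma lorentz0P t : lorentz t = 0 <-> t.1.1 ^+ 2 + t.1.2 ^+ 2 = t.2 ^+ 2.
Proof. by rewrite /lorentz; split=> [/eqP|->]; rewrite ?subrr // subr_eq0 => /eqP. Qed.

Lemma int_parity (n : int) : exists k, n = 2 * k \/ n = 2 * k + 1.
Proof. by exists (n %/ 2)%Z; lia. Qed.

Lemma pyth_bounds x y z : pyth (x, y, z) ->
  [/\ x < z, y < z, ~~ (2 %| x)%Z & ~~ (2 %| z)%Z].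
Proof.
move=> [x0 [y0 [z0 [y2 [/(gcd3_eq1P (_, _, _)) g e]]]]].
have xz : x < z by nia.
have yz : y < z by nia.
have /dvdzP[b ey] := y2; subst y.
have [a [ea|ea]] := int_parity x; have [c [ec|ec]] := int_parity z; subst x z.
- suff : (2 %| 1)%Z by rewrite dvdz1.
  by apply: g => /=; lia.
- exfalso; nia.
- exfalso; nia.
- split=> //; lia.
Qed.

Lemma pyth_act l t : pyth t -> pyth (act l t).
Proof.
case: t => [[x y] z] H; have [xz yz _ _] := pyth_bounds H.
case: H => [x0 [y0 [z0 [y2 [g e]]]]].
have lor : lorentz (act l (x, y, z)) = 0 by rewrite lorentz_actB lorentz_twist; apply/lorentz0P.
have g' : gcd3 (act l (x, y, z)) = 1 by apply/gcd3_act.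
case: l g' lor => g' /lorentz0P e' /=; do ![split] => //; lia.
Qed.

Lemma pyth_t345 : pyth t345.
Proof. by do ![split]. Qed.

Lemma pyth_run w : pyth (run w t345).
Proof. by elim: w => [|l w IH]; [exact: pyth_t345 | exact: pyth_act]. Qed.

Lemma act_z l t : pyth t -> t.2 < (act l t).2.
Proof.
case: t => [[x y] z] H; have [xz yz _ _] := pyth_bounds H.
by case: H => [x0 [y0 _]]; case: l => /=; lia.
Qed.

(* The letter and the argument are determined by the image: apply B^-1 and
   read off the signs. *)
Lemma act_inj a b t t' : pyth t -> pyth t' -> act a t = act b t' -> a = b /\ t = t'.
Proof.
move=> + + /(can_inj actBK) E.
case: t t' E => [[x y] z] [[x' y'] z'] E [x0 [y0 _]] [x0' [y0' _]].
case: a E; case: b => /= -[ex ey ez]; subst; split => //; try lia.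
all: by congr (_, _, _); apply: oppr_inj.
Qed.

Lemma run_z w : (5 <= (run w t345).2) /\ (w != [::] -> 5 < (run w t345).2).
Proof.
elim: w => [|l w [IH _]] //=; have := act_z l (pyth_run w); lia.
Qed.

Lemma run_inj : injective (run^~ t345).
Proof.
elim=> [|a u IH] [|b v] //= E.
- by have := (run_z (b :: v)).2 isT; rewrite /= -E.
- by have := (run_z (a :: u)).2 isT; rewrite /= E.
- by have [-> /IH ->] := act_inj (pyth_run u) (pyth_run v) E.
Qed.

Lemma pyth_eq_t345 x y z : pyth (x, y, z) -> 2 * x + y = 2 * z -> (x, y, z) = t345.
Proof.
move=> [x0 [y0 [z0 [_ [/(gcd3_eq1P (_, _, _)) g e]]]]] b0.
have exy : 3 * y = 4 * x by nia.
have : (y - x %| 1)%Z by apply: g => /=; apply/and3P; split; apply/dvdzP;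
  [exists 3 | exists 4 | exists 5]; lia.
rewrite dvdz1 => /eqP m1; congr (_, _, _); lia.
Qed.

(* Descent: a primitive triple other than (3,4,5) is the image, under the
   letter given by the signs of B^-1 p, of a primitive triple with smaller z. *)
Lemma pyth_parent p : pyth p -> p <> t345 ->
  exists l t, [/\ pyth t, t.2 < p.2 & p = act l t].
Proof.
case: p => [[x y] z] H ne; have [xz yz xodd _] := pyth_bounds H.
have b0 : 2 * x + y != 2 * z by apply/eqP => /(pyth_eq_t345 H).
case: H => [x0 [y0 [z0 [y2 [g e]]]]].
have c_pos : 2 * x + 2 * y < 3 * z by have := sqr_ge0 (x - y); nia.
have c_lt : z < x + y by nia.
have not_both_neg : ~ (x + 2 * y < 2 * z /\ 2 * x + y < 2 * z) by nia.
have [l [tx ty]] : exists l, 0 < (twist l (actB_inv (x, y, z))).1.1 /\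
                             0 < (twist l (actB_inv (x, y, z))).1.2.
  have [ha|ha] := ltrP 0 (x + 2 * y - 2 * z);
    have [hb|hb] := ltrP 0 (2 * x + y - 2 * z).
  - by exists LB => /=; lia.
  - by exists LA => /=; lia.
  - by exists LC => /=; lia.
  - by exfalso; lia.
set t := twist l (actB_inv (x, y, z)).
have Et : (x, y, z) = act l t by rewrite /t /act twistK actB_invK.
have lt : lorentz t = 0 by rewrite lorentz_twist lorentz_actB_inv; apply/lorentz0P.
have gt : gcd3 t = 1 by apply/(gcd3_act l); rewrite -Et.
exists l, t; split=> //; clear Et; move: tx ty lt gt; rewrite /t; clear t.
  by case: l => tx ty /lorentz0P lt gt /=; do ![split] => //; lia.
by case: l => /=; lia.
Qed.

Lemma pyth_descent p : pyth p -> exists w, p = run w t345.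
Proof.
have [n] : exists n : nat, p.2 < n%:Z by exists (absz p.2).+1; lia.
elim: n p => [|n IH] p lt_pn hp; first by case: p lt_pn hp => -[x y] z /= ? [_ [_ ?]]; lia.
have [-> | ne] := eqVneq p t345; first by exists [::].
have [l [t [ht lt_tp ->]]] := pyth_parent hp (elimN eqP ne).
have [|w ->] := IH t _ ht; first lia.
by exists (l :: w).
Qed.

(* The automaton reading a word from the right; its state is (z < 2x, z < 2y)
   for the triple w (3,4,5), and (true, true) at the root. *)
Definition step (l : letter) (s : bool * bool) : bool * bool :=
  match l with LA => (~~ s.2, true) | LB => (true, true) | LC => (true, ~~ s.1) end.

Definition state (w : seq letter) : bool * bool := foldr step (true, true) w.

Lemma state_run w : let '(x, y, z) := run w t345 in state w = (z < 2 * x, z < 2 * y).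
Proof.
elim: w => [|l w IH] //=; have := pyth_run w.
case: (run w t345) IH => -[x y] z -> H; have [xz yz _ zodd] := pyth_bounds H.
by case: H => [x0 [y0 _]]; case: l => /=; congr (_, _); lia.
Qed.

Definition good (w : seq letter) : Prop := state w <> (true, true).

Lemma good_run w : good w <-> let '(x, y, z) := run w t345 in 2 * x < z \/ 2 * y < z.
Proof.
rewrite /good; have := state_run w; have := pyth_run w.
case: (run w t345) => -[x y] z /pyth_bounds[_ _ _ zodd] ->.
by case: (ltrP z (2 * x)) => hx; case: (ltrP z (2 * y)) => hy; split => //; lia.
Qed.

(* Reading B resets the state, so the state of u B r is that of u. *)
Lemma state_B u r : state (u ++ LB :: r) = state u.
Proof. by elim: u => [|l u /= ->]. Qed.

Lemma state_ff w : state w <> (false, false).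
Proof. by case: w => [|[] w] //=; case: (state w). Qed.

Inductive shape (a c : letter) : seq letter -> Prop :=
| shape_aa n : shape a c [:: a, a & n]
| shape_a : shape a c [:: a]
| shape_aB n : shape a c [:: a, LB & n]
| shape_ac u : shape a c u -> shape a c [:: a, c & u].

Lemma shape_state u :
  (shape LA LC u -> state u = (false, true)) /\ (shape LC LA u -> state u = (true, false)).
Proof. by split; elim=> //= {}u _ ->. Qed.

Lemma state_shape u :
  (state u = (false, true) -> shape LA LC u) /\ (state u = (true, false) -> shape LC LA u).
Proof.
have [n] := ubnP (size u); elim: n u => // n IH [|l u] //= /ltnSE lt_un.
have state_tail v : state v != (false, false) by apply/eqP/state_ff.
case: l; split=> // -[E].
- case: u lt_un E => [|[] u] lt_un E; try constructor.
  move: E (state_tail u) => /=; case Es: (state u) => [[] []] //= _ _.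
  exact: (IH u (ltnW lt_un)).1.
- case: u lt_un E => [|[] u] lt_un E; try constructor.
  move: E (state_tail u) => /=; case Es: (state u) => [[] []] //= _ _.
  exact: (IH u (ltnW lt_un)).2.
Qed.

Lemma good_shape u : good u <-> shape LA LC u \/ shape LC LA u.
Proof.
have [[s1 s2] [s3 s4]] := (state_shape u, shape_state u); rewrite /good.
split=> [|[/s3 | /s4] -> //].
case: (state u) s1 s2 (@state_ff u) => -[] [] s1 s2 ff ne.
- by case: ne.
- by right; apply: s2.
- by left; apply: s1.
- by case: ff.
Qed.

Lemma mx_col a b c d e f g h i x y z :
  mx3 a b c d e f g h i *m col3 x y z =
  col3 (a * x + b * y + c * z) (d * x + e * y + f * z) (g * x + h * y + i * z).
Proof.
apply/matrixP => r s; rewrite !mxE !big_ord_recl big_ord0 !mxE.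
by case: r => -[|[|[|?]]] ? //=; rewrite addr0 !addrA.
Qed.

Definition v3 (t : trip) : 'cV[int]_3 := let '(x, y, z) := t in col3 x y z.

Lemma v3_inj : injective v3.
Proof.
move=> [[x y] z] [[x' y'] z'] /matrixP E.
by have := E 0 0; have := E 1 0; have := E 2 0; rewrite !mxE /= => -> -> ->.
Qed.

Definition matl (l : letter) : 'M[int]_3 :=
  match l with LA => matA | LB => matB | LC => matC end.

Lemma matl_act l t : matl l *m v3 t = v3 (act l t).
Proof.
case: t => -[x y] z; case: l; rewrite mx_col /=; congr col3; ring.
Qed.

Definition wmat (w : seq letter) : 'M[int]_3 := foldr (fun l M => matl l *m M) 1%:M w.

Lemma wmat_cat u v : wmat (u ++ v) = wmat u *m wmat v.
Proof. by elim: u => [|l u IH] /=; rewrite ?mul1mx // IH mulmxA. Qed.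

Lemma wmat_v3 w t : wmat w *m v3 t = v3 (run w t).
Proof. by elim: w => [|l w IH] /=; rewrite ?mul1mx // -mulmxA IH matl_act. Qed.

Lemma wmat_inj : injective wmat.
Proof. by move=> u v E; apply: run_inj; apply: v3_inj; rewrite /= -!wmat_v3 E. Qed.

Definition hmat (w : seq letter) : 'M[int]_3 := wmat w *m matB.

Lemma hmat_mul u v : hmat u *m hmat v = hmat (u ++ LB :: v).
Proof. by rewrite /hmat wmat_cat /= !mulmxA. Qed.

Lemma matB_root : matB *m col3 1 0 1 = v3 t345.
Proof. by rewrite mx_col. Qed.

Lemma inG_wmat N : inG N <-> exists w, N = wmat w.
Proof.
split=> [|[w ->]].
  by elim=> [|M _ [w ->]|M _ [w ->]|M _ [w ->]]; [exists [::] | exists (rcons w LA)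
    | exists (rcons w LB) | exists (rcons w LC)]; rewrite // -cats1 wmat_cat /= mulmx1.
elim/last_ind: w => [|w l IH]; first exact: inG1.
by rewrite -cats1 wmat_cat /= mulmx1; case: l; constructor.
Qed.

Definition rep (k : nat) (u : seq letter) : seq letter := flatten (nseq k u).

Lemma wmat_nseq k l : wmat (nseq k l) = matl l ^+ k.
Proof. by elim: k => [|k IH]; rewrite ?expr0 // exprS /= IH mulmxE. Qed.

Lemma wmat_rep k u : wmat (rep k u) = wmat u ^+ k.
Proof. by elim: k => [|k IH]; rewrite ?expr0 // exprS /rep /= wmat_cat -/(rep k u) IH mulmxE. Qed.

Lemma shape_rep a c k v : shape a c v -> shape a c (rep k [:: a; c] ++ v).
Proof. by move=> sv; elim: k => [|k IH] //=; constructor. Qed.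

Definition families (a c : letter) (M : 'M[int]_3) : Prop :=
  exists (N : 'M[int]_3) (k : nat), inG N /\ (0 < k)%N /\
  let A := matl a in let C := matl c in let B := matB in
  (M = A ^+ 2 *m N *m B \/ M = A ^+ k *m B \/ M = A *m B *m N *m B \/
   M = (A *m C) ^+ k *m A ^+ 2 *m N *m B \/
   M = (A *m C) ^+ k *m A *m B *m N *m B \/
   M = (A *m C) ^+ k *m A *m B).

Lemma shape_families a c u : shape a c u -> families a c (hmat u).
Proof.
rewrite /hmat.
have inG_w w : inG (wmat w) by apply/inG_wmat; exists w.
elim=> [n | | n | {}u _ [N [k [hN [k0 F]]]]].
- exists (wmat n), 1%N; split; first exact: inG_w.
  split=> //; left.
  by rewrite /= expr2 -mulmxE !mulmxA.
- exists 1%:M, 1%N; split; first exact: inG1.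
  split=> //.
  by right; left; rewrite /= expr1 mulmx1.
- exists (wmat n), 1%N; split; first exact: inG_w.
  split=> //; right; right; left.
  by rewrite /= !mulmxA.
have -> : wmat [:: a, c & u] *m matB = (matl a *m matl c) *m (wmat u *m matB).
  by rewrite /= !mulmxA.
case: F => [->|[->|[->|[->|[->|->]]]]].
- exists N, 1%N; split=> //; split=> //; do 3 right; left.
  by rewrite expr1 !mulmxA.
- case: k k0 => [|[|k]] // _.
    exists N, 1%N; split=> //; split=> //; do 5 right.
    by rewrite !expr1 !mulmxA.
  exists (matl a ^+ k), 1%N; split; first by rewrite -wmat_nseq.
  split=> //; do 3 right; left.
  by rewrite expr1 -(add2n k) exprD -!mulmxE !mulmxA.
- exists N, 1%N; split=> //; split=> //; do 4 right; left.
  by rewrite expr1 !mulmxA.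
- exists N, k.+1; split=> //; split=> //; do 3 right; left.
  by rewrite [_ ^+ k.+1]exprS -mulmxE !mulmxA.
- exists N, k.+1; split=> //; split=> //; do 4 right; left.
  by rewrite [_ ^+ k.+1]exprS -mulmxE !mulmxA.
- exists N, k.+1; split=> //; split=> //; do 5 right.
  by rewrite [_ ^+ k.+1]exprS -mulmxE !mulmxA.
Qed.

Lemma families_shape a c M : families a c M -> exists u, shape a c u /\ M = hmat u.
Proof.
move=> [_ [k [/inG_wmat[n ->] [k0 F]]]].
have rep_ac v : wmat (rep k [:: a; c] ++ v) = (matl a *m matl c) ^+ k *m wmat v.
  by rewrite wmat_cat wmat_rep /= mulmx1.
rewrite /hmat.
case: F => [->|[->|[->|[->|[->|->]]]]].
- exists [:: a, a & n]; split; first exact: shape_aa.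
  by rewrite /= expr2 -mulmxE !mulmxA.
- exists (nseq k a); split; last by rewrite wmat_nseq.
  by clear rep_ac; case: k k0 => [|[|k]] // _; constructor.
- exists [:: a, LB & n]; split; first exact: shape_aB.
  by rewrite /= !mulmxA.
- exists (rep k [:: a; c] ++ [:: a, a & n]); split; first by apply/shape_rep/shape_aa.
  by rewrite rep_ac /= expr2 -mulmxE !mulmxA.
- exists (rep k [:: a; c] ++ [:: a, LB & n]); split; first by apply/shape_rep/shape_aB.
  by rewrite rep_ac /= !mulmxA.
- exists (rep k [:: a; c] ++ [:: a]); split; first by apply/shape_rep/shape_a.
  by rewrite rep_ac /= mulmx1.
Qed.

Lemma inH_families M : inH M <-> families LA LC M \/ families LC LA M.
Proof.
rewrite /inH /families /=; split=> [[N [k [hN [k0 H]]]] | [] [N [k [hN [k0 H]]]]].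
  case: H => [E|[E|[E|[E|[E|[E|[E|[E|[E|[E|[E|E]]]]]]]]]]];
    [left|left|left|right|right|right|left|left|left|right|right|right];
    by exists N, k; do 2!split=> //; tauto.
all: by exists N, k; do 2!split=> //; tauto.
Qed.

Lemma inH_good M : inH M <-> exists u, good u /\ M = hmat u.
Proof.
rewrite inH_families; split=> [[] /families_shape[u [su ->]] | [u [/good_shape[] su ->]]].
- by exists u; split=> //; apply/good_shape; left.
- by exists u; split=> //; apply/good_shape; right.
- by left; apply: shape_families.
- by right; apply: shape_families.
Qed.

Lemma inH'_good M : inH' M <-> M = 1%:M \/ exists u, good u /\ M = hmat u.
Proof. by rewrite /inH' inH_good; split=> -[]; auto. Qed.

(* H' is closed under products, since u B v is good when u is. *)
Lemma inH'_mul M N : inH' M -> inH' N -> inH' (M *m N).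
Proof.
rewrite !inH'_good => -[->|[u [gu ->]]] [->|[v [gv ->]]].
- by left; rewrite mulmx1.
- by right; exists v; rewrite mul1mx.
- by right; exists u; rewrite mulmx1.
- by right; exists (u ++ LB :: v); rewrite hmat_mul /good state_B.
Qed.

Lemma hmat_root u : hmat u *m col3 1 0 1 = v3 (run u t345).
Proof. by rewrite -mulmxA matB_root wmat_v3. Qed.

Lemma run_neq_root u : v3 (run u t345) <> col3 1 0 1.
Proof.
have := pyth_run u; case: (run u t345) => -[x y] z [_ [y0 _]] /(@v3_inj _ (1, 0, 1)) [].
by move=> _ y_eq0 _; move: y0; rewrite y_eq0.
Qed.

Lemma inP_root : inP (col3 1 0 1).
Proof. by exists 1, 0, 1; split=> //; right. Qed.

Lemma inP_run u : good u -> inP (v3 (run u t345)).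
Proof.
move/good_run; have := pyth_run u; case: (run u t345) => -[x y] z H small.
by exists x, y, z; split=> //; left; split=> //; lia.
Qed.

Lemma inP_cases v : inP v -> v = col3 1 0 1 \/ exists u, good u /\ v = v3 (run u t345).
Proof.
move=> [x [y [z [-> [[H small] | [-> [-> ->]]]]]]]; last by left.
have [u Eu] := @pyth_descent (x, y, z) H; right; exists u.
by split; [apply/good_run; rewrite -Eu; lia | rewrite -Eu].
Qed.

Lemma orbit_unique v : inP v -> exists! M, inH' M /\ M *m col3 1 0 1 = v.
Proof.
have hmat_H u : good u -> inH' (hmat u) by move=> gu; apply/inH'_good; right; exists u.
case/inP_cases=> [-> | [u [gu ->]]].
  exists 1%:M; split=> [|M [/inH'_good[-> //|[u [_ ->]]]]]; first by split; [right|rewrite mul1mx].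
  by rewrite hmat_root => /run_neq_root.
exists (hmat u); split=> [|M [/inH'_good[->|[u' [_ ->]]]]].
  by split; [apply: hmat_H | apply: hmat_root].
  by rewrite mul1mx => /esym /run_neq_root.
by rewrite hmat_root => /v3_inj /run_inj ->.
Qed.

Lemma inH'_act M v : inH' M -> inP v -> inP (M *m v).
Proof.
move=> HM /[dup] Hv /orbit_unique[M0 [[H0 <-] _]].
rewrite mulmxA; case/inH'_good: (inH'_mul HM H0) => [->|[u [gu ->]]].
  by rewrite mul1mx; exact: inP_root.
by rewrite hmat_root; exact: inP_run.
Qed.

Lemma all_Prop_cat {T : eqType} {P : T -> Prop} {s1 s2 : seq T} :
  all_Prop P (s1 ++ s2) <-> all_Prop P s1 /\ all_Prop P s2.
Proof.
split=> [H | [H1 H2] y]; last by rewrite mem_cat => /orP[/H1|/H2].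
by split=> y ys; apply: H; rewrite mem_cat ys ?orbT.
Qed.

Lemma all_Prop_cons {T : eqType} {P : T -> Prop} {x : T} {s : seq T} :
  all_Prop P (x :: s) <-> P x /\ all_Prop P s.
Proof.
rewrite -cat1s all_Prop_cat; split=> -[H1 H2]; split=> //.
  by apply: H1; rewrite mem_seq1.
by move=> y; rewrite mem_seq1 => /eqP ->.
Qed.

Lemma all_Prop_rcons {T : eqType} {P : T -> Prop} {s : seq T} {x : T} :
  all_Prop P (rcons s x) <-> all_Prop P s /\ P x.
Proof.
rewrite -cats1 all_Prop_cat; split=> -[Ps Px]; split=> //.
  by apply: Px; rewrite mem_seq1.
by move=> y; rewrite mem_seq1 => /eqP ->.
Qed.

Lemma cat_cons_lt (T : Type) (u u' r r' : seq T) a a' :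
  u ++ a :: r = u' ++ a' :: r' -> (size u < size u')%N ->
  exists m, u' = u ++ a :: m /\ r = m ++ a' :: r'.
Proof.
elim: u u' => [|x u IH] [|x' u'] //= [-> E] lt_uu'; first by exists u'; rewrite E.
by have [m [-> ->]] := IH u' E lt_uu'; exists m.
Qed.

Definition irreducible (w : seq letter) : Prop :=
  good w /\ forall w1 w2, w = w1 ++ LB :: w2 -> ~ (good w1 /\ good w2).

Definition glue (ws : seq (seq letter)) : seq letter := flatten [seq w ++ [:: LB] | w <- ws].

Lemma glue_cons w ws : glue (w :: ws) = w ++ LB :: glue ws.
Proof. by rewrite /glue /= -catA. Qed.

Lemma glue_cat ws ws' : glue (ws ++ ws') = glue ws ++ glue ws'.
Proof. by rewrite /glue map_cat flatten_cat. Qed.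

(* Two factorisations into irreducibles cannot start with blocks of different
   lengths: the longer block would split into two good words. *)
Lemma irreducible_prefix u u' us us' : irreducible u -> irreducible u' -> all_Prop irreducible us ->
  u ++ LB :: glue us = u' ++ LB :: glue us' -> ~ (size u < size u')%N.
Proof.
move=> [gu _] [_ split_u'] Hus E lt; have [m [Eu' Em]] := cat_cons_lt E lt; clear E.
case: us Hus Em => [_ | v vs /all_Prop_cons[[gv _] _]].
  by move/(congr1 size); rewrite size_cat addnS.
rewrite glue_cons => Em.
apply: (split_u' u m Eu'); split=> //.
by rewrite /good -(state_B m (glue us')) -Em state_B.
Qed.

Lemma factor_unique ws ws' : all_Prop irreducible ws -> all_Prop irreducible ws' ->
  glue ws = glue ws' -> ws = ws'.
Proof.
elim: ws ws' => [|u us IH] [|u' us'] //; rewrite ?glue_cons.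
- by move=> _ _ /(congr1 size); rewrite size_cat addnS.
- by move=> _ _ /(congr1 size); rewrite size_cat addnS.
move=> /all_Prop_cons[iu ius] /all_Prop_cons[iu' ius'] E.
case: (ltngtP (size u) (size u')) => [lt|lt|eq_size].
- by case: (irreducible_prefix iu iu' ius E).
- by case: (irreducible_prefix iu' iu ius' (esym E)).
move/eqP: E; rewrite eqseq_cat // => /andP[/eqP -> /eqP[/IH ->]] //.
Qed.

Lemma factor_exists w : good w -> exists ws, all_Prop irreducible ws /\ glue ws = w ++ [:: LB].
Proof.
have [n] := ubnP (size w); elim: n w => // n IH w /ltnSE lt_wn gw.
case: (classic (irreducible w)) => [iw | not_irr].
  by exists [:: w]; split; [apply/all_Prop_cons | rewrite /glue /= cats0].
have [w1 [w2 [Ew [g1 g2]]]] : exists w1 w2, w = w1 ++ LB :: w2 /\ good w1 /\ good w2.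
  apply: NNPP => none; apply: not_irr; split=> // w1 w2 Ew g12.
  by apply: none; exists w1, w2.
have [lt1 lt2] : (size w1 < n)%N /\ (size w2 < n)%N.
  by move: lt_wn; rewrite Ew size_cat /=; lia.
have [ws1 [i1 E1]] := IH w1 lt1 g1; have [ws2 [i2 E2]] := IH w2 lt2 g2.
exists (ws1 ++ ws2); split; first by apply/all_Prop_cat.
by rewrite glue_cat E1 E2 Ew -!catA.
Qed.

Lemma mprod_rcons s x : mprod (rcons s x) = mprod s *m x.
Proof. by elim: s => [|y s IH] /=; rewrite ?mulmx1 ?mul1mx // IH mulmxA. Qed.

Lemma infinite_of_inj (T : eqType) (S : T -> Prop) (f : nat -> T) :
  injective f -> (forall n, S (f n)) -> infinite_set S.
Proof.
move=> f_inj Sf s.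
have : ~~ all (mem s) [seq f i | i <- iota 0 (size s).+1].
  apply/negP => /allP sub.
  have /uniq_leq_size/(_ sub) : uniq [seq f i | i <- iota 0 (size s).+1].
    by rewrite map_inj_uniq // iota_uniq.
  by rewrite size_map size_iota ltnn.
by case/allPn=> _ /mapP[i _ ->] fi; exists (f i).
Qed.

Section FreeMonoid.

Variables (H X : 'M[int]_3 -> Prop).
Hypothesis factor : forall M, H M -> exists s, all_Prop X s /\ M = mprod s.
Hypothesis factor_uniq :
  forall s s', all_Prop X s -> all_Prop X s' -> mprod s = mprod s' -> s = s'.
Hypothesis mprod_H : forall s, all_Prop X s -> H (mprod s).

Lemma free_reach M : H M -> reach (cayley_edge X) 1%:M M.
Proof.
case/factor=> s [+ ->]; elim/last_ind: s => [|s x IH]; first by constructor.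
move=> /all_Prop_rcons[Xs Xx].
by apply: reach_step (IH Xs) _; exists x; rewrite mprod_rcons.
Qed.

Lemma free_root_no_edge g : H g -> ~ cayley_edge X g 1%:M.
Proof.
case/factor=> s [Xs ->] [x [Xx E]].
have Xsx : all_Prop X (rcons s x) by apply/all_Prop_rcons.
have X_nil : all_Prop X [::] by [].
have := factor_uniq Xsx X_nil; rewrite mprod_rcons -E => /(_ erefl).
by case: s {Xs E Xsx}.
Qed.

Lemma free_parent h : H h -> h <> 1%:M -> exists! g, H g /\ cayley_edge X g h.
Proof.
case/factor=> s [+ ->]; case/lastP: s => [|s x] Xsx ne; first by case: ne.
have [Xs Xx] := all_Prop_rcons.1 Xsx.
exists (mprod s); split=> [|g [/factor[s' [Xs' ->]] [x' [Xx' E]]]].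
  by split; [exact: mprod_H | exists x; rewrite mprod_rcons].
have Xs'x' : all_Prop X (rcons s' x') by apply/all_Prop_rcons.
by have := factor_uniq Xsx Xs'x'; rewrite E mprod_rcons => /(_ erefl) /rcons_inj[->].
Qed.

Lemma free_cancel g x y : H g -> X x -> X y -> g *m x = g *m y -> x = y.
Proof.
case/factor=> s [Xs ->] Xx Xy E.
have Xsx : all_Prop X (rcons s x) by apply/all_Prop_rcons.
have Xsy : all_Prop X (rcons s y) by apply/all_Prop_rcons.
by have := factor_uniq Xsx Xsy; rewrite !mprod_rcons => /(_ E) /rcons_inj[].
Qed.

Lemma free_children_infinite g (f : nat -> 'M[int]_3) :
  H g -> injective f -> (forall n, X (f n)) -> infinite_set (cayley_edge X g).
Proof.
move=> Hg f_inj Xf; apply: (@infinite_of_inj _ _ (fun n => g *m f n)).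
  by move=> m n /(free_cancel Hg (Xf m) (Xf n)) /f_inj.
by move=> n; exists (f n).
Qed.

End FreeMonoid.

Definition generator (M : 'M[int]_3) : Prop := exists w, irreducible w /\ M = hmat w.

Lemma hmat_inj : injective hmat.
Proof. by move=> u v /(congr1 (mulmx^~ (col3 1 0 1))); rewrite !hmat_root => /v3_inj/run_inj. Qed.

Lemma mprod_hmat ws : mprod (map hmat ws) = wmat (glue ws).
Proof. by elim: ws => [|w ws IH] //=; rewrite IH glue_cons wmat_cat /hmat /= mulmxA. Qed.

Lemma all_generator s :
  all_Prop generator s -> exists ws, all_Prop irreducible ws /\ s = map hmat ws.
Proof.
elim: s => [|x s IH]; first by exists [::].
move=> /all_Prop_cons[[w [iw ->]] /IH[ws [iws ->]]].
by exists (w :: ws); split=> //; apply/all_Prop_cons.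
Qed.

Lemma all_generator_map ws : all_Prop irreducible ws -> all_Prop generator (map hmat ws).
Proof.
elim: ws => [|w ws IH] // /all_Prop_cons[iw /IH iws].
by apply/all_Prop_cons; split=> //; exists w.
Qed.

Lemma generator_inH' x : generator x -> inH' x.
Proof. by move=> [w [[gw _] ->]]; apply/inH'_good; right; exists w. Qed.

Lemma generator_factor M : inH' M -> exists s, all_Prop generator s /\ M = mprod s.
Proof.
case/inH'_good=> [->|[u [gu ->]]]; first by exists [::].
have [ws [iws E]] := factor_exists gu.
exists (map hmat ws); split; first exact: all_generator_map.
by rewrite mprod_hmat E /hmat wmat_cat /= mulmx1.
Qed.

Lemma generator_factor_uniq s s' :
  all_Prop generator s -> all_Prop generator s' -> mprod s = mprod s' -> s = s'.
Proof.
move=> /all_generator[ws [iws ->]] /all_generator[ws' [iws' ->]].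
by rewrite !mprod_hmat => /wmat_inj /(factor_unique iws iws') ->.
Qed.

Lemma mprod_generator s : all_Prop generator s -> inH' (mprod s).
Proof.
elim: s => [_|x s IH /all_Prop_cons[gx /IH Hs]]; first by right.
exact: inH'_mul (generator_inH' gx) Hs.
Qed.

Definition genA (n : nat) : 'M[int]_3 := hmat (nseq n.+1 LA).

Lemma genA_generator n : generator (genA n).
Proof.
exists (nseq n.+1 LA); split=> //; split.
  by apply/good_shape; left; case: n => [|n]; constructor.
by move=> w1 w2 /(congr1 (fun w => LB \in w)); rewrite mem_nseq mem_cat mem_head orbT andbF.
Qed.

Lemma genA_inj : injective genA.
Proof. by move=> m n /hmat_inj /(congr1 size); rewrite !size_nseq => -[]. Qed.

Theorem theorem2p2 :
  (* H' is a submonoid of the 3x3 integer matrices *)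
  inH' 1%:M /\
  (forall M N, inH' M -> inH' N -> inH' (M *m N)) /\
  (* H' acts on cal P by left multiplication *)
  (forall M v, inH' M -> inP v -> inP (M *m v)) /\
  (* the action is free/simply transitive on the orbit of the root (1,0,1) *)
  (forall v, inP v -> exists! M, inH' M /\ M *m col3 1 0 1 = v) /\
  (* H' is free and infinitely generated, and its Cayley digraph w.r.t. the
     free generating set X is a regular rooted infinite tree of infinite degree *)
  (exists X : 'M[int]_3 -> Prop,
     (forall x, X x -> inH' x) /\
     infinite_set X /\
     (forall M, inH' M -> exists! s : seq 'M[int]_3, all_Prop X s /\ M = mprod s) /\
     (* rooted tree: every vertex is reachable from the root I,
        the root has no in-edge, every other vertex exactly one *)
     (forall M, inH' M -> reach (cayley_edge X) 1%:M M) /\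
     (forall g, inH' g -> ~ cayley_edge X g 1%:M) /\
     (forall h, inH' h -> h <> 1%:M ->
        exists! g, inH' g /\ cayley_edge X g h) /\
     (* regular of infinite degree: distinct generators give distinct children *)
     (forall g x y, inH' g -> X x -> X y -> g *m x = g *m y -> x = y) /\
     (forall g, inH' g -> infinite_set (cayley_edge X g))).
Proof.
split; first by right.
split; first exact: inH'_mul.
split; first exact: inH'_act.
split; first exact: orbit_unique.
exists generator; split; first exact: generator_inH'.
split; first exact: infinite_of_inj genA_inj genA_generator.
split.
  move=> M /generator_factor[s [Xs EM]]; exists s; split=> // s' [Xs' EM'].
  by apply: generator_factor_uniq; rewrite -?EM -?EM'.
split; first exact: free_reach generator_factor.
split; first exact: free_root_no_edge generator_factor generator_factor_uniq.
split; first exact: free_parent generator_factor generator_factor_uniq mprod_generator.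
split; first exact: free_cancel generator_factor generator_factor_uniq.
move=> g Hg.
exact: free_children_infinite generator_factor generator_factor_uniq g genA
  Hg genA_inj genA_generator.
Qed.
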